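(* The string rewriting system $W'=\{0_2\rhd\to 0_3\rhd\}\cup A\cup B$ is terminating.
   Context: An SRS induces $u\ell v\to urv$ for each rule $\ell\to r$; terminating means no infinite rewrite sequence. Alphabet $\{0_2,1_2,0_3,1_3,2_3,\lhd,\rhd\}$; $A=\{0_20_3\to0_30_2,\ 0_21_3\to0_31_2,\ 0_22_3\to1_30_2,\ 1_20_3\to1_31_2,\ 1_21_3\to2_30_2,\ 1_22_3\to2_31_2\}$; $B=\{\lhd0_3\to\lhd1_2,\ \lhd1_3\to\lhd0_20_2,\ \lhd2_3\to\lhd0_21_2\}$. *)

From Stdlib Require Import List.
Import ListNotations.

Inductive sym : Type := O2 | I2 | O3 | I3 | T3 | Lhd | Rhd.

Definition srs := list (list sym * list sym).

Inductive rstep (R : srs) : list sym -> list sym -> Prop :=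
| rstep_intro : forall u v l r, In (l, r) R -> rstep R (u ++ l ++ v) (u ++ r ++ v).

Definition terminating (R : srs) : Prop :=
  ~ exists f : nat -> list sym, forall n, rstep R (f n) (f (S n)).

Definition A_rules : srs :=
  [ ([O2; O3], [O3; O2]);
    ([O2; I3], [O3; I2]);
    ([O2; T3], [I3; O2]);
    ([I2; O3], [I3; I2]);
    ([I2; I3], [T3; O2]);
    ([I2; T3], [T3; I2]) ].

Definition B_rules : srs :=
  [ ([Lhd; O3], [Lhd; I2]);
    ([Lhd; I3], [Lhd; O2; O2]);
    ([Lhd; T3], [Lhd; O2; I2]) ].

Definition W' : srs := ([O2; Rhd], [O3; Rhd]) :: A_rules ++ B_rules.

(* Read a word left to right as a sequence of blocks separated by ◁ and ▷;
   inside a block, 0_2/1_2 are binary digits and 0_3/1_3/2_3 ternary digits,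
   so a block denotes a positive number in mixed radix (with a leading 1).
   The rules of A and B do not change the number denoted by any block,
   whereas 0_2 ▷ -> 0_3 ▷ replaces a factor 2 by a factor 3 in the block
   ending at ▷.  Hence the sum of the 2-adic valuations of the blocks
   ("valuation weight") drops strictly under the ▷-rule and is invariant
   under A and B.  Among the latter, B strictly decreases the number of
   ternary digits, and A keeps it while decreasing the number of inversions
   (binary digits standing before ternary ones).  So every step decreases
   the triple (valuation weight, ternary count, inversions)
   lexicographically; a generic lemma turns such a well-founded measure
   into termination. *)

From Stdlib Require Import List Lia PArith Relation_Operators Lexicographic_Product Wf_nat.
Import ListNotations.

Lemma terminating_of_measure (R : srs) (M : Type) (ltM : M -> M -> Prop)
  (m : list sym -> M) :
  well_founded ltM ->
  (forall x y, rstep R x y -> ltM (m y) (m x)) ->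
  terminating R.
Proof.
  intros wf_ltM decreasing [f steps].
  assert (no_chain : forall a n, m (f n) = a -> False).
  { intro a; induction a as [a IH] using (well_founded_induction wf_ltM).
    intros n <-.
    exact (IH (m (f (S n))) (decreasing _ _ (steps n)) (S n) eq_refl). }
  exact (no_chain _ 0 eq_refl).
Qed.

Fixpoint val2 (p : positive) : nat :=
  match p with xO q => S (val2 q) | _ => 0 end.

Lemma val2_mul3 (c : positive) : val2 (c * 3) = val2 c.
Proof. induction c; simpl; auto. Qed.

(* Reading state: the total valuation [fst] of the closed blocks and the
   value [snd] of the block being read. *)
Definition state : Type := (nat * positive)%type.

Definition read_symbol (s : state) (x : sym) : state :=
  let (a, c) := s in
  match x with
  | O2 => (a, xO c)
  | I2 => (a, xI c)
  | O3 => (a, c * 3)%positive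
  | I3 => (a, c * 3 + 1)%positive
  | T3 => (a, c * 3 + 2)%positive
  | Lhd | Rhd => (a + val2 c, 1%positive)
  end.

Definition read (w : list sym) (s : state) : state := fold_left read_symbol w s.

Definition weight (s : state) : nat := fst s + val2 (snd s).

(* Sum of the 2-adic valuations of all blocks of a word. *)
Definition valuation_weight (w : list sym) : nat := weight (read w (0, 1%positive)).

Definition shift (k : nat) (s : state) : state := (fst s + k, snd s).

(* The accumulated valuation only ever grows by amounts independent of it. *)
Lemma read_shift (v : list sym) (k : nat) (s : state) :
  read v (shift k s) = shift k (read v s).
Proof.
  unfold read; revert s; induction v as [|x v IH]; intros [a c]; [reflexivity|].
  simpl; rewrite <- IH; f_equal.
  destruct x; unfold shift; simpl; f_equal; lia.
Qed.

Lemma valuation_weight_context (u v l r : list sym) (k : nat) :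
  (forall s, read l s = shift k (read r s)) ->
  valuation_weight (u ++ l ++ v) = k + valuation_weight (u ++ r ++ v).
Proof.
  intro shifted; unfold valuation_weight, read.
  rewrite !fold_left_app.
  change (fold_left read_symbol l ?s) with (read l s).
  change (fold_left read_symbol r ?s) with (read r s).
  rewrite shifted.
  change (fold_left read_symbol v ?s) with (read v s).
  rewrite read_shift; unfold weight, shift; simpl; lia.
Qed.

(* The ▷-rule replaces the factor 2 closing a block by a factor 3. *)
Lemma rhd_rule_shift (s : state) : read [O2; Rhd] s = shift 1 (read [O3; Rhd] s).
Proof.
  destruct s as [a c]; unfold shift; simpl.
  rewrite val2_mul3; f_equal; lia.
Qed.

Lemma AB_rules_preserve_reading (l r : list sym) :
  In (l, r) (A_rules ++ B_rules) -> forall s, read l s = shift 0 (read r s).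
Proof.
  intros rule [a c]; simpl in rule.
  repeat destruct rule as [rule|rule]; try contradiction;
    injection rule as <- <-; unfold shift; cbn [read fold_left read_symbol fst snd];
    f_equal; lia.
Qed.

Definition is_ternary (x : sym) : nat := match x with O3 | I3 | T3 => 1 | _ => 0 end.
Definition is_binary (x : sym) : nat := match x with O2 | I2 => 1 | _ => 0 end.

Fixpoint ternary_count (w : list sym) : nat :=
  match w with [] => 0 | x :: w' => is_ternary x + ternary_count w' end.
Fixpoint binary_count (w : list sym) : nat :=
  match w with [] => 0 | x :: w' => is_binary x + binary_count w' end.

Fixpoint inversions (w : list sym) : nat :=
  match w with [] => 0 | x :: w' => is_binary x * ternary_count w' + inversions w' end.

Lemma ternary_count_app (u w : list sym) :
  ternary_count (u ++ w) = ternary_count u + ternary_count w.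
Proof. induction u; simpl; lia. Qed.

Lemma inversions_app (u w : list sym) :
  inversions (u ++ w) = inversions u + binary_count u * ternary_count w + inversions w.
Proof. induction u; simpl; [reflexivity|]. rewrite IHu, ternary_count_app; nia. Qed.

Lemma inversions_context (u v l r : list sym) :
  ternary_count r = ternary_count l -> binary_count r = binary_count l ->
  inversions r < inversions l ->
  inversions (u ++ r ++ v) < inversions (u ++ l ++ v).
Proof.
  intros same_ternary same_binary fewer.
  rewrite !inversions_app, !ternary_count_app, same_ternary, same_binary; lia.
Qed.

(* Each rule of A moves a binary digit past a ternary one. *)
Lemma A_rule_counts (l r : list sym) : In (l, r) A_rules ->
  ternary_count r = ternary_count l /\ binary_count r = binary_count l /\
  inversions r < inversions l.
Proof.
  intro rule; simpl in rule.
  repeat destruct rule as [rule|rule]; try contradiction;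
    injection rule as <- <-; simpl; lia.
Qed.

(* Each rule of B turns a ternary digit into binary ones. *)
Lemma B_rule_counts (l r : list sym) : In (l, r) B_rules ->
  ternary_count r < ternary_count l.
Proof.
  intro rule; simpl in rule.
  repeat destruct rule as [rule|rule]; try contradiction;
    injection rule as <- <-; simpl; lia.
Qed.

Definition lex3 : (nat * nat) * nat -> (nat * nat) * nat -> Prop :=
  slexprod (nat * nat) nat (slexprod nat nat lt lt) lt.

Lemma wf_lex3 : well_founded lex3.
Proof. apply wf_slexprod; [apply wf_slexprod|]; apply lt_wf. Qed.

Definition measure (w : list sym) : (nat * nat) * nat :=
  ((valuation_weight w, ternary_count w), inversions w).

Lemma W'_step_decreases (x y : list sym) : rstep W' x y -> lex3 (measure y) (measure x).
Proof.
  intros [u v l r rule]; unfold measure.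
  destruct rule as [rhd | AB].
  - injection rhd as <- <-.
    rewrite (valuation_weight_context u v _ _ 1 rhd_rule_shift).
    do 2 apply left_slex; lia.
  - rewrite (valuation_weight_context u v _ _ 0 (AB_rules_preserve_reading _ _ AB)).
    apply in_app_or in AB as [A | B].
    + destruct (A_rule_counts _ _ A) as (same_ternary & same_binary & fewer).
      assert (ternary_count (u ++ l ++ v) = ternary_count (u ++ r ++ v)) as ->
        by (rewrite !ternary_count_app; lia).
      apply right_slex, inversions_context; assumption.
    + apply left_slex, right_slex.
      pose proof (B_rule_counts _ _ B); rewrite !ternary_count_app; lia.
Qed.

Theorem mainTheorem9 : terminating W'.
Proof.
  exact (terminating_of_measure W' _ lex3 measure wf_lex3 W'_step_decreases).
Qed.
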